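(* Let $n\ge 1$ be an integer. There exist a tensor $A\in\mathbb{C}^{2n\times 2n\times 2}$ with $\operatorname{rank}(A)=3n$ and a sequence of tensors $(A_k)_{k\in\mathbb{N}}\subset\mathbb{C}^{2n\times 2n\times 2}$ with $\operatorname{rank}(A_k)=2n$ for every $k$, such that $A_k\to A$ as $k\to\infty$ in the Euclidean (entrywise) topology.
   Context: $\mathbb{C}^{l\times m\times p}$ is the space of complex arrays $(a_{ijk})$ of size $l\times m\times p$. For vectors $\mathbf{x},\mathbf{y},\mathbf{z}$ of appropriate sizes, $\mathbf{x}\otimes\mathbf{y}\otimes\mathbf{z}=(x_iy_jz_k)$ is an elementary tensor. The tensor rank of a tensor is the least number of elementary tensors (over $\mathbb{C}$) whose sum equals it. *)

From Stdlib Require Import Reals.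
Open Scope R_scope.

Record C := mkC { Re : R; Im : R }.

Definition C0 : C := mkC 0 0.
Definition Cadd (a b : C) : C := mkC (Re a + Re b) (Im a + Im b).
Definition Cmul (a b : C) : C :=
  mkC (Re a * Re b - Im a * Im b) (Re a * Im b + Im a * Re b).
Definition Csub (a b : C) : C := mkC (Re a - Re b) (Im a - Im b).
Definition Cnorm (a : C) : R := sqrt (Re a * Re a + Im a * Im a).

Fixpoint Csum (r : nat) (f : nat -> C) : C :=
  match r with
  | O => C0
  | S r' => Cadd (Csum r' f) (f r')
  end.

(* A tensor in C^{l x m x p}: a function of three indices; only the entries
   with i < l, j < m, k < p are meaningful. *)
Definition tensor := nat -> nat -> nat -> C.

Definition sum_of_elementary (l m p r : nat) (A : tensor) : Prop :=
  exists (x y z : nat -> nat -> C),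
    forall i j k, (i < l)%nat -> (j < m)%nat -> (k < p)%nat ->
      A i j k = Csum r (fun t => Cmul (Cmul (x t i) (y t j)) (z t k)).

Definition tensor_rank_eq (l m p : nat) (A : tensor) (r : nat) : Prop :=
  sum_of_elementary l m p r A /\
  forall r', (r' < r)%nat -> ~ sum_of_elementary l m p r' A.

(* Entrywise (equivalently Euclidean) convergence of a sequence of tensors *)
Definition tensor_converges (l m p : nat) (Ak : nat -> tensor) (A : tensor) : Prop :=
  forall eps, eps > 0 -> exists N : nat, forall k, (N <= k)%nat ->
    forall i j q, (i < l)%nat -> (j < m)%nat -> (q < p)%nat ->
      Cnorm (Csub (Ak k i j q) (A i j q)) < eps.

From Pilot Require Import Defs.
From Stdlib Require Import Reals Lia.
From mathcomp Require all_boot all_algebra Rstruct complex.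

(* The two slices of a tensor in C^(m x m x 2) form a matrix pencil (M0, M1), and a
   decomposition into r elementary tensors is exactly a simultaneous factorisation
   M0 = X D0 Y^T, M1 = X D1 Y^T with D0, D1 diagonal of size r.  For e <> 0 the pencil
   (I, [[0, I], [0, e I]]) is diagonalisable, so its tensor has rank 2n; as e -> 0 it
   tends to the Jordan pencil (I, [[0, I], [0, 0]]), whose rank is 3n.  For the latter,
   the lower half Xb of X has n independent columns; subtracting from the upper half
   the combination of Xb that cancels these columns gives Q such that [Q D0; Q D1]
   kills n independent coordinate vectors while [Q D0; Q D1] Y^T is invertible of
   size 2n, whence r >= 2n + n. *)

Definition inv_succ (k : nat) : R := / INR (S k).

Lemma inv_succ_vanishes eps : eps > 0 ->
  exists N, forall k, (N <= k)%nat -> Rabs (inv_succ k) < eps.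
Proof.
intros eps_pos; destruct (archimed_cor1 eps eps_pos) as [N [inv_N_lt N_pos]].
exists N; intros k le_Nk; unfold inv_succ.
rewrite Rabs_right by (left; apply Rinv_0_lt_compat, lt_0_INR; lia).
apply Rle_lt_trans with (/ INR N); [|exact inv_N_lt].
apply Rinv_le_contravar; [apply lt_0_INR; lia | apply le_INR; lia].
Qed.

Lemma inv_succ_neq0 k : inv_succ k <> 0.
Proof. exact (Rinv_neq_0_compat _ (not_0_INR _ (Nat.neq_succ_0 k))). Qed.

Module JordanPencil.
Import all_boot all_algebra Rstruct complex.
Set Implicit Arguments. Unset Strict Implicit. Unset Printing Implicit Defensive.
Import GRing.Theory.
Local Open Scope ring_scope.
Local Open Scope complex_scope.

Section PencilRank.
Variable F : fieldType.

Lemma mul_diag_colsub1 r n (f : 'I_n -> 'I_r) (d : 'rV[F]_r) :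
  diag_mx d *m colsub f 1%:M = colsub f 1%:M *m diag_mx (colsub f d).
Proof.
rewrite mul_diag_mx mul_mx_diag; apply/matrixP => t i; rewrite !mxE.
by case: eqP => [->|]; rewrite ?mulr1 ?mulr0 ?mul1r ?mul0r.
Qed.

Lemma coordinate_section n r (B : 'M[F]_(n, r)) : (n <= \rank B)%N ->
  exists S : 'M[F]_(r, n), B *m S \in unitmx /\
    forall d : 'rV_r, exists d' : 'rV_n, diag_mx d *m S = S *m diag_mx d'.
Proof.
move=> rB; have fullBt : row_full B^T.
  by rewrite -col_leq_rank mxrank_tr.
set f := fullrankfun fullBt; exists (colsub f 1%:M); split.
  rewrite mulmx_colsub mulmx1.
  have -> : colsub f B = (rowsub f B^T)^T by rewrite trmx_mxsub trmxK.
  by rewrite unitmx_tr fullrowsub_unit.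
by move=> d; exists (colsub f d); apply: mul_diag_colsub1.
Qed.

Lemma jordan_pencil_rank_ge n r (X Y : 'M[F]_(n + n, r)) (d0 d1 : 'rV[F]_r) :
  X *m diag_mx d0 *m Y^T = 1%:M ->
  X *m diag_mx d1 *m Y^T = block_mx 0 1%:M 0 0 ->
  (n + n + n <= r)%N.
Proof.
rewrite -[X]vsubmxK; set Xt := usubmx X; set Xb := dsubmx X.
rewrite !mul_col_mx scalar_mx_block -[block_mx _ _ _ _]/(col_mx _ _).
rewrite -[block_mx 0 1%:M 0 0]/(col_mx _ _).
case/eq_col_mx => Xt0 Xb0 /eq_col_mx[Xt1 Xb1].
have rXb : (n <= \rank Xb)%N.
  apply: (@mulmx1_min_rank _ _ _ _ _ 1%:M (diag_mx d0 *m Y^T *m col_mx 0 1%:M)).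
  by rewrite mul1mx !mulmxA Xb0 mul_row_col mul0mx mulmx1 add0r.
have [S [uXbS dS]] := coordinate_section rXb.
pose G := Xt *m S *m invmx (Xb *m S).
pose Q := Xt - G *m Xb.
have QS : Q *m S = 0 by rewrite mulmxBl -!mulmxA mulVmx // mulmx1 subrr.
pose K := col_mx (Q *m diag_mx d0) (Q *m diag_mx d1).
have KS : K *m S = 0.
  have [[e0 E0] [e1 E1]] := (dS d0, dS d1).
  by rewrite mul_col_mx -!mulmxA E0 E1 !mulmxA QS !mul0mx col_mx0.
have KY : K *m Y^T = block_mx 1%:M (- G) 0 1%:M.
  rewrite mul_col_mx !mulmxBl -!(mulmxA G) Xt0 Xb0 Xt1 Xb1 row_mx0 mulmx0 subr0.
  by rewrite mul_mx_row mulmx0 mulmx1 opp_row_mx add_row_mx oppr0 addr0 sub0r.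
have rK : (n + n <= \rank K)%N.
  have uKY : K *m Y^T \in unitmx.
    by rewrite KY unitmxE det_ublock !det1 mulr1 unitr1.
  by apply: leq_trans (mxrankM_maxl K Y^T); rewrite mxrank_unit.
have rS : (n <= \rank S)%N.
  by apply: leq_trans (mxrankM_maxr Xb S); rewrite mxrank_unit.
exact: leq_trans (leq_add rK rS) (mulmx0_rank_max KS).
Qed.

End PencilRank.

Notation CC := (complex R).

Definition to_complex (c : Defs.C) : CC := Complex (Defs.Re c) (Defs.Im c).
Definition of_complex (z : CC) : Defs.C := mkC (complex.Re z) (complex.Im z).

Lemma of_complexK : cancel of_complex to_complex. Proof. by case. Qed.
Lemma to_complexK : cancel to_complex of_complex. Proof. by case. Qed.
Lemma to_complex_inj : injective to_complex.
Proof. by case=> ? ?; case=> ? ? [-> ->]. Qed.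
Lemma to_complexD a b : to_complex (Cadd a b) = to_complex a + to_complex b.
Proof. by case: a; case: b. Qed.
Lemma to_complexB a b : to_complex (Csub a b) = to_complex a - to_complex b.
Proof. by case: a; case: b. Qed.
Lemma to_complexM a b : to_complex (Cmul a b) = to_complex a * to_complex b.
Proof. by case: a; case: b. Qed.

Lemma to_complex_sum r f : to_complex (Csum r f) = \sum_(t < r) to_complex (f t).
Proof. by elim: r => [|r IH]; rewrite ?big_ord0 // big_ord_recr /= to_complexD IH. Qed.

Lemma Cnorm_real (x : R) : Cnorm (of_complex x%:C) = Rabs x.
Proof.
rewrite /Cnorm /= -sqrt_Rsqr_abs /Rsqr; congr sqrt.
by rewrite Rmult_0_l Rplus_0_r.
Qed.

Definition padmx m n (M : 'M[CC]_(m, n)) (i j : nat) : CC :=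
  if insub i is Some i' then (if insub j is Some j' then M i' j' else 0) else 0.

Lemma padmxE m n (M : 'M[CC]_(m, n)) (i : 'I_m) (j : 'I_n) : padmx M i j = M i j.
Proof. by rewrite /padmx !valK. Qed.

Definition pencil_tensor m (M0 M1 : 'M[CC]_m) : tensor :=
  fun i j k => of_complex (padmx (if k == 0 then M0 else M1) i j).

Lemma pencil_tensorE m (M0 M1 : 'M[CC]_m) (i j : 'I_m) k :
  to_complex (pencil_tensor M0 M1 i j k) = (if k == 0 then M0 else M1) i j.
Proof. by rewrite of_complexK padmxE. Qed.

Lemma sum_of_elementary_pencilP m r (M0 M1 : 'M[CC]_m) :
  sum_of_elementary m m 2 r (pencil_tensor M0 M1) <->
  exists (X Y : 'M[CC]_(m, r)) (d0 d1 : 'rV[CC]_r),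
    M0 = X *m diag_mx d0 *m Y^T /\ M1 = X *m diag_mx d1 *m Y^T.
Proof.
split.
  case=> x [y [z T_sum]].
  exists (\matrix_(i, t) to_complex (x t i)), (\matrix_(i, t) to_complex (y t i)).
  exists (\row_t to_complex (z t 0)), (\row_t to_complex (z t 1)).
  suff Mk k : (k < 2)%N -> forall i j : 'I_m, (if k == 0 then M0 else M1) i j =
      \sum_(t < r) to_complex (x t i) * to_complex (y t j) * to_complex (z t k).
    have [/= M0E M1E] := (Mk 0%N isT, Mk 1%N isT).
    by split; apply/matrixP => i j; rewrite mul_mx_diag !mxE ?M0E ?M1E;
      apply: eq_bigr => t _; rewrite !mxE mulrAC.
  move=> lt_k2 i j; rewrite -pencil_tensorE T_sum ?to_complex_sum; try exact/ltP.
  by apply: eq_bigr => t _; rewrite !to_complexM.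
case=> X [Y [d0 [d1 [-> ->]]]].
exists (fun t i => of_complex (padmx X i t)), (fun t i => of_complex (padmx Y i t)).
exists (fun t k => of_complex (padmx (if k == 0 then d0 else d1) 0 t)).
move=> i j k /ltP lt_im /ltP lt_jm /ltP lt_k2; apply: to_complex_inj.
rewrite (pencil_tensorE _ _ (Ordinal lt_im) (Ordinal lt_jm)) to_complex_sum.
case: k lt_k2 => [|[|//]] _ /=; rewrite mul_mx_diag !mxE; apply: eq_bigr => t _;
  rewrite !to_complexM !of_complexK (padmxE X (Ordinal lt_im)) (padmxE Y (Ordinal lt_jm));
  by rewrite (padmxE _ ord0) !mxE mulrAC.
Qed.

Definition jordan_pencil n (e : CC) : tensor :=
  pencil_tensor (1%:M : 'M_(n + n)) (block_mx 0 1%:M 0 e%:M).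

Lemma tensor_rank_jordan_pencil0 n :
  tensor_rank_eq (n + n) (n + n) 2 (jordan_pencil n 0) (n + n + n).
Proof.
split.
  apply/sum_of_elementary_pencilP.
  exists (row_mx 1%:M (col_mx 1%:M 0)), (row_mx 1%:M (col_mx 0 1%:M)).
  exists (row_mx (const_mx 1) 0), (row_mx 0 (const_mx 1)).
  rewrite !diag_mx_row !linear0 !diag_const_mx tr_row_mx tr_col_mx !trmx1 trmx0.
  rewrite !mul_row_block !mul_row_col !(mulmx0, mul0mx, mulmx1, addr0, add0r).
  by rewrite mul_col_row !(mulmx0, mul0mx, mulmx1) scalar_mx_block raddf0.
move=> r /ltP lt_r /sum_of_elementary_pencilP[X [Y [d0 [d1 [E0 E1]]]]].
rewrite raddf0 in E1.
by have := jordan_pencil_rank_ge (esym E0) (esym E1); rewrite leqNgt lt_r.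
Qed.

Lemma tensor_rank_jordan_pencil n (e : CC) : e != 0 ->
  tensor_rank_eq (n + n) (n + n) 2 (jordan_pencil n e) (n + n).
Proof.
move=> nz_e; split.
  apply/sum_of_elementary_pencilP.
  exists (block_mx 1%:M 1%:M 0 e%:M), (block_mx 1%:M (- e^-1%:M) 0 e^-1%:M)^T.
  exists (const_mx 1), (row_mx 0 (const_mx e)).
  rewrite trmxK diag_mx_row !diag_const_mx mulmx1 !mulmx_block.
  rewrite !(mulmx0, mul0mx, mulmx1, mul1mx, addr0, add0r) addNr raddf0 mul0mx add0r.
  by rewrite -!scalar_mxM mulfV // mulfK // scalar_mx_block.
move=> r /ltP lt_r /sum_of_elementary_pencilP[X [Y [d0 [_ [E0 _]]]]].
rewrite -mulmxA in E0.
by have := mulmx1_min (esym E0); rewrite leqNgt lt_r.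
Qed.

Lemma Cnorm_jordan_pencil_sub n (x : R) i j q : (i < n + n)%coq_nat -> (j < n + n)%coq_nat ->
  Rle (Cnorm (Csub (jordan_pencil n x%:C i j q) (jordan_pencil n 0 i j q))) (Rabs x).
Proof.
move=> /ltP lt_i /ltP lt_j.
have [b Eb] : exists b : bool,
    to_complex (Csub (jordan_pencil n x%:C i j q) (jordan_pencil n 0 i j q)) =
    if b then x%:C else 0.
  rewrite to_complexB (pencil_tensorE _ _ (Ordinal lt_i) (Ordinal lt_j)).
  rewrite (pencil_tensorE _ _ (Ordinal lt_i) (Ordinal lt_j)).
  case: (q == 0); first by exists false; rewrite subrr.
  case: (split_ordP (Ordinal lt_i)) => i' ->; case: (split_ordP (Ordinal lt_j)) => j' ->;
    rewrite ?(block_mxEul, block_mxEur, block_mxEdl, block_mxEdr) !mxE ?subrr ?mul0rn ?subr0;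
    first [by exists false | by exists (i' == j'); case: (i' == j')].
rewrite -[Csub _ _]to_complexK Eb; case: {Eb} b; first by rewrite Cnorm_real; apply: Rle_refl.
by rewrite (Cnorm_real 0) Rabs_R0; apply: Rabs_pos.
Qed.

Lemma jordan_pencil_converges n :
  tensor_converges (n + n) (n + n) 2
    (fun k => jordan_pencil n (inv_succ k)%:C) (jordan_pencil n 0).
Proof.
move=> eps /inv_succ_vanishes[N small_N]; exists N => k /small_N small_k i j q lt_i lt_j _.
exact: Rle_lt_trans _ _ _ (Cnorm_jordan_pencil_sub (inv_succ k) q lt_i lt_j) small_k.
Qed.

Lemma jordan_pencil_degeneration n :
  exists (A : tensor) (Ak : nat -> tensor),
    tensor_rank_eq (n + n) (n + n) 2 A (n + n + n) /\
    (forall k, tensor_rank_eq (n + n) (n + n) 2 (Ak k) (n + n)) /\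
    tensor_converges (n + n) (n + n) 2 Ak A.
Proof.
exists (jordan_pencil n 0), (fun k => jordan_pencil n (inv_succ k)%:C).
split; first exact: tensor_rank_jordan_pencil0.
split; last exact: jordan_pencil_converges.
move=> k; apply: tensor_rank_jordan_pencil.
by apply/eqP => /(congr1 (@complex.Re _)); apply: inv_succ_neq0.
Qed.

End JordanPencil.

Theorem corollary2 (n : nat) (hn : (1 <= n)%nat) :
  exists (A : tensor) (Ak : nat -> tensor),
    tensor_rank_eq (2 * n) (2 * n) 2 A (3 * n) /\
    (forall k, tensor_rank_eq (2 * n) (2 * n) 2 (Ak k) (2 * n)) /\
    tensor_converges (2 * n) (2 * n) 2 Ak A.
Proof.
replace (2 * n)%nat with (n + n)%nat by lia.
replace (3 * n)%nat with (n + n + n)%nat by lia.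
exact (JordanPencil.jordan_pencil_degeneration n).
Qed.
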